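(* Let $(Y,\mathfrak{T},\mathcal{P})$ be a primal fuzzy topological space. Then the family $\mathcal{B}_{\mathcal{P}}=\{\mu-\bar{\lambda}:\ \mu\in\mathfrak{T},\ \lambda\in\mathbb{I}^Y,\ \lambda\notin\mathcal{P}\}$ is a fuzzy base for the primal fuzzy topology $\mathfrak{T}^\diamond$; that is, $\mathcal{B}_{\mathcal{P}}\subseteq\mathfrak{T}^\diamond$, and for every fuzzy point $y_t$ and every $\eta\in\mathfrak{T}^\diamond$ with $y_t\prec\eta$ there exists $\beta\in\mathcal{B}_{\mathcal{P}}$ with $y_t\prec\beta\subseteq\eta$.
   Context: Let $Y$ be a nonempty set and $\mathbb{I}=[0,1]$. A fuzzy set in $Y$ is a map $Y\to\mathbb{I}$; $\mathbb{I}^Y$ is the set of all fuzzy sets; $0_Y,1_Y$ are the constant maps with values $0,1$; $\mu\subseteq\nu$ means $\mu(y)\le\nu(y)$ for all $y$; unions/intersections are pointwise sup/inf; $\bar\mu=1_Y-\mu$. For $\mu,\nu\in\mathbb{I}^Y$, $(\mu\oplus\nu)(y)=\min(\mu(y)+\nu(y),1)$ and $(\mu-\nu)(y)=\max(\mu(y)-\nu(y),0)$. A fuzzy point $y_t$ ($y\in Y$, $t\in(0,1]$) is the fuzzy set with value $t$ at $y$ and $0$ elsewhere; $y_t\in\mu$ means $t\le\mu(y)$. We write $y_t\prec\mu$ if $t+\mu(y)>1$. A set $F$ of fuzzy points is identified with the fuzzy set $y\mapsto\sup\{t: y_t\in F\}$ (with $\sup\emptyset=0$). A fuzzy topology on $Y$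 is a family $\mathfrak{T}\subseteq\mathbb{I}^Y$ containing $0_Y,1_Y$ and closed under finite intersections and arbitrary unions. For a fuzzy point $y_t$, $\mathcal{Q}(y_t)=\{\mu\in\mathfrak{T}: y_t\prec\mu\}$. A fuzzy primal on $Y$ is a family $\mathcal{P}\subseteq\mathbb{I}^Y$ such that: (i) $1_Y\notin\mathcal{P}$; (ii) if $\mu\in\mathcal{P}$ and $\nu\subseteq\mu$ then $\nu\in\mathcal{P}$; (iii) if $\mu\cap\nu\in\mathcal{P}$ then $\mu\in\mathcal{P}$ or $\nu\in\mathcal{P}$. A primal fuzzy topological space is a triple $(Y,\mathfrak{T},\mathcal{P})$ with $\mathfrak{T}$ a fuzzy topology and $\mathcal{P}$ a fuzzy primal on $Y$. For $\lambda\in\mathbb{I}^Y$, $\lambda^\diamond$ is the set of fuzzy points $y_t$ such that $\bar{\lambda}\oplus\bar{\mu}\in\mathcal{P}$ for every $\mu\in\mathcal{Q}(y_t)$, and $Cl^\diamond(\lambda)=\lambda\cup\lambda^\diamond$. The primal fuzzy topology is $\mathfrak{T}^\diamond=\{\mu\in\mathbb{I}^Y: Cl^\diamond(\bar{\mu})=\bar{\mu}\}$ (a fuzzy topology on $Y$). *)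

From Stdlib Require Import Reals.
Open Scope R_scope.

Definition fset (Y : Type) := Y -> R.

Definition is_fuzzy {Y : Type} (mu : fset Y) : Prop :=
  forall y, 0 <= mu y <= 1.

Definition fconst {Y : Type} (c : R) : fset Y := fun _ => c.
Definition fsub {Y : Type} (mu nu : fset Y) : Prop := forall y, mu y <= nu y.
Definition finter {Y : Type} (mu nu : fset Y) : fset Y := fun y => Rmin (mu y) (nu y).
Definition fcompl {Y : Type} (mu : fset Y) : fset Y := fun y => 1 - mu y.
Definition fUnion {Y : Type} (mu nu : fset Y) : fset Y := fun y => Rmax (mu y) (nu y).
Definition foplus {Y : Type} (mu nu : fset Y) : fset Y := fun y => Rmin (mu y + nu y) 1.
Definition fminus {Y : Type} (mu nu : fset Y) : fset Y := fun y => Rmax (mu y - nu y) 0.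

(* the union (pointwise sup, with sup of empty = 0) of a family F of fuzzy sets *)
Definition is_union {Y : Type} (F : fset Y -> Prop) (nu : fset Y) : Prop :=
  forall y, is_lub (fun r => r = 0 \/ exists mu, F mu /\ r = mu y) (nu y).

(* fuzzy point y_t, t in (0,1] *)
Definition fpoint_ok (t : R) : Prop := 0 < t <= 1.
Definition qcoinc {Y : Type} (y : Y) (t : R) (mu : fset Y) : Prop := t + mu y > 1.

Record fuzzy_topology {Y : Type} (T : fset Y -> Prop) : Prop := {
  ft_fuzzy : forall mu, T mu -> is_fuzzy mu;
  ft_zero : T (fconst 0);
  ft_one : T (fconst 1);
  ft_inter : forall mu nu, T mu -> T nu -> T (finter mu nu);
  ft_union : forall F nu, (forall mu, F mu -> T mu) -> is_union F nu -> T nu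
}.

Record fuzzy_primal {Y : Type} (P : fset Y -> Prop) : Prop := {
  fp_fuzzy : forall mu, P mu -> is_fuzzy mu;
  fp_one : ~ P (fconst 1);
  fp_down : forall mu nu, P mu -> is_fuzzy nu -> fsub nu mu -> P nu;
  fp_inter : forall mu nu, is_fuzzy mu -> is_fuzzy nu ->
               P (finter mu nu) -> P mu \/ P nu
}.

Definition Qnbhd {Y : Type} (T : fset Y -> Prop) (y : Y) (t : R) (mu : fset Y) : Prop :=
  T mu /\ qcoinc y t mu.

Definition diamond_pt {Y : Type} (T P : fset Y -> Prop) (lam : fset Y) (y : Y) (t : R) : Prop :=
  fpoint_ok t /\
  forall mu, Qnbhd T y t mu -> P (foplus (fcompl lam) (fcompl mu)).

(* lambda^diamond as a fuzzy set: y |-> sup { t : y_t in lambda^diamond } (sup empty = 0) *)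
Definition is_diamond {Y : Type} (T P : fset Y -> Prop) (lam : fset Y) (d : fset Y) : Prop :=
  forall y, is_lub (fun r => r = 0 \/ diamond_pt T P lam y r) (d y).

Definition is_cl_diamond {Y : Type} (T P : fset Y -> Prop) (lam : fset Y) (c : fset Y) : Prop :=
  exists d, is_diamond T P lam d /\ c = fUnion lam d.

Definition T_diamond {Y : Type} (T P : fset Y -> Prop) (mu : fset Y) : Prop :=
  is_fuzzy mu /\ is_cl_diamond T P (fcompl mu) (fcompl mu).

Definition B_P {Y : Type} (T P : fset Y -> Prop) (beta : fset Y) : Prop :=
  exists mu lam, T mu /\ is_fuzzy lam /\ ~ P lam /\ beta = fminus mu (fcompl lam).

From Stdlib Require Import Reals Lra Classical FunctionalExtensionality.
Open Scope R_scope.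

(* A fuzzy set mu is open in T^diamond exactly when every fuzzy point y_t of
   (1 - mu)^diamond satisfies t <= 1 - mu(y): then the supremum
   (1 - mu)^diamond lies below 1 - mu and Cl^diamond(1 - mu) = 1 - mu.
   - Basic sets are open: let beta = mu - (1 - lam) with mu open, lam not in
     P.  If y_t lies in (1 - beta)^diamond with t > 1 - beta(y), then mu is a
     q-neighbourhood of y_t (as beta <= mu), so beta \oplus (1 - mu) is in P;
     this set contains lam, whence lam in P by heredity, a contradiction.
   - Basic sets form a base: if eta is T^diamond-open and y_t q-coincides
     with eta, then y_t is not in (1 - eta)^diamond, so some open mu in
     Q(y_t) has lam := eta \oplus (1 - mu) outside P; the basic set
     mu - (1 - lam) equals eta /\ mu, which q-coincides with y_t and lies
     in eta. *)

Ltac minmax_lra := unfold Rmax, Rmin in *; repeat destruct Rle_dec; lra.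

Section FuzzyArithmetic.

Context {Y : Type}.

Lemma fcompl_involutive (mu : fset Y) : fcompl (fcompl mu) = mu.
Proof.
  apply functional_extensionality; intro y; unfold fcompl; lra.
Qed.

Lemma basic_fuzzy (mu lam : fset Y) :
  is_fuzzy mu -> is_fuzzy lam -> is_fuzzy (fminus mu (fcompl lam)).
Proof.
  intros Fmu Flam y; specialize (Fmu y); specialize (Flam y).
  unfold fminus, fcompl; minmax_lra.
Qed.

Lemma basic_sub_open (mu lam : fset Y) :
  is_fuzzy mu -> is_fuzzy lam -> fsub (fminus mu (fcompl lam)) mu.
Proof.
  intros Fmu Flam y; specialize (Fmu y); specialize (Flam y).
  unfold fminus, fcompl; minmax_lra.
Qed.

(* lam is recovered below (mu - (1 - lam)) \oplus (1 - mu): the key inclusion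
   used to transfer membership in the primal from the latter to lam. *)
Lemma basic_oplus_compl_sup (mu lam : fset Y) :
  is_fuzzy mu -> is_fuzzy lam ->
  fsub lam (foplus (fminus mu (fcompl lam)) (fcompl mu)).
Proof.
  intros Fmu Flam y; specialize (Fmu y); specialize (Flam y).
  unfold foplus, fminus, fcompl; minmax_lra.
Qed.

Lemma foplus_fuzzy (mu nu : fset Y) :
  is_fuzzy mu -> is_fuzzy nu -> is_fuzzy (foplus mu nu).
Proof.
  intros Fmu Fnu y; specialize (Fmu y); specialize (Fnu y).
  unfold foplus; minmax_lra.
Qed.

Lemma fcompl_fuzzy (mu : fset Y) : is_fuzzy mu -> is_fuzzy (fcompl mu).
Proof.
  intros Fmu y; specialize (Fmu y); unfold fcompl; lra.
Qed.

Lemma basic_of_oplus (eta mu : fset Y) :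
  is_fuzzy eta -> is_fuzzy mu ->
  fminus mu (fcompl (foplus eta (fcompl mu))) = finter eta mu.
Proof.
  intros Feta Fmu; apply functional_extensionality; intro y.
  specialize (Feta y); specialize (Fmu y).
  unfold fminus, fcompl, foplus, finter; minmax_lra.
Qed.

End FuzzyArithmetic.

Section PrimalOpenSets.

Context {Y : Type} (T P : fset Y -> Prop).

(* The diamond of a fuzzy set always exists: its defining sets are bounded by 1. *)
Lemma diamond_exists (lam : fset Y) (y : Y) :
  {m | is_lub (fun r => r = 0 \/ diamond_pt T P lam y r) m}.
Proof.
  apply completeness.
  - exists 1; intros r [-> | [[_ Ht] _]]; lra.
  - exists 0; auto.
Qed.

Lemma T_diamond_intro (mu : fset Y) :
  is_fuzzy mu ->
  (forall y t, diamond_pt T P (fcompl mu) y t -> t <= fcompl mu y) ->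
  T_diamond T P mu.
Proof.
  intros Fmu Hle; split; [exact Fmu |].
  set (d := fun y => proj1_sig (diamond_exists (fcompl mu) y)).
  assert (Hd : is_diamond T P (fcompl mu) d)
    by (intro y; exact (proj2_sig (diamond_exists (fcompl mu) y))).
  exists d; split; [exact Hd |].
  apply functional_extensionality; intro y.
  assert (Hdy : d y <= fcompl mu y).
  { apply (proj2 (Hd y)); intros r [-> | Hr].
    - specialize (Fmu y); unfold fcompl; lra.
    - exact (Hle y r Hr). }
  unfold fUnion; minmax_lra.
Qed.

Lemma T_diamond_pt_le (eta : fset Y) (y : Y) (t : R) :
  T_diamond T P eta -> diamond_pt T P (fcompl eta) y t -> t <= fcompl eta y.
Proof.
  intros [_ [d [Hd Heq]]] Ht.
  assert (Hdy : d y <= fcompl eta y).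
  { assert (E := f_equal (fun f => f y) Heq); simpl in E.
    unfold fUnion in E; revert E; minmax_lra. }
  pose proof (proj1 (Hd y) t (or_intror Ht)); lra.
Qed.

Lemma not_diamond_pt_witness (lam : fset Y) (y : Y) (t : R) :
  fpoint_ok t -> ~ diamond_pt T P lam y t ->
  exists mu, Qnbhd T y t mu /\ ~ P (foplus (fcompl lam) (fcompl mu)).
Proof.
  intros Ht Hnot; apply NNPP; intro Hnone.
  apply Hnot; split; [exact Ht |].
  intros mu Hmu; apply NNPP; intro HnP; eauto.
Qed.

Hypothesis HT : fuzzy_topology T.
Hypothesis HP : fuzzy_primal P.

Lemma B_P_open (beta : fset Y) : B_P T P beta -> T_diamond T P beta.
Proof.
  intros (mu & lam & Tmu & Flam & NPlam & ->).
  pose proof (ft_fuzzy _ HT mu Tmu) as Fmu.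
  apply T_diamond_intro; [exact (basic_fuzzy mu lam Fmu Flam) |].
  intros y r [_ Hr]; apply Rnot_lt_le; intro Hgt.
  apply NPlam.
  assert (Hq : qcoinc y r mu).
  { pose proof (basic_sub_open mu lam Fmu Flam y).
    unfold qcoinc, fcompl in *; lra. }
  specialize (Hr mu (conj Tmu Hq)); rewrite fcompl_involutive in Hr.
  exact (fp_down _ HP _ _ Hr Flam (basic_oplus_compl_sup mu lam Fmu Flam)).
Qed.

Lemma B_P_nbhd (y : Y) (t : R) (eta : fset Y) :
  fpoint_ok t -> T_diamond T P eta -> qcoinc y t eta ->
  exists beta, B_P T P beta /\ qcoinc y t beta /\ fsub beta eta.
Proof.
  intros Ht Heta Hq.
  pose proof (proj1 Heta) as Feta.
  assert (Hnot : ~ diamond_pt T P (fcompl eta) y t).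
  { intro Hpt; pose proof (T_diamond_pt_le eta y t Heta Hpt).
    unfold qcoinc, fcompl in *; lra. }
  destruct (not_diamond_pt_witness _ y t Ht Hnot) as [mu [[Tmu Qmu] NP]].
  rewrite fcompl_involutive in NP.
  pose proof (ft_fuzzy _ HT mu Tmu) as Fmu.
  exists (finter eta mu); split; [| split].
  - exists mu, (foplus eta (fcompl mu)).
    split; [exact Tmu | split; [| split; [exact NP |]]].
    + exact (foplus_fuzzy _ _ Feta (fcompl_fuzzy _ Fmu)).
    + symmetry; exact (basic_of_oplus eta mu Feta Fmu).
  - unfold qcoinc, finter in *; minmax_lra.
  - intro z; unfold finter; minmax_lra.
Qed.

End PrimalOpenSets.

Theorem theorem4p7 (Y : Type) (y0 : Y) (T P : fset Y -> Prop)
  (HT : fuzzy_topology T) (HP : fuzzy_primal P) :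
  (forall beta, B_P T P beta -> T_diamond T P beta) /\
  (forall (y : Y) (t : R) (eta : fset Y),
     fpoint_ok t -> T_diamond T P eta -> qcoinc y t eta ->
     exists beta, B_P T P beta /\ qcoinc y t beta /\ fsub beta eta).
Proof.
  split.
  - exact (B_P_open T P HT HP).
  - exact (B_P_nbhd T P HT).
Qed.
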